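(* Let $\mathsf G=(A_\star,B,C,D)$ with $A_\star=SJ_\star S^{-1}$ its Jordan decomposition and $\rho(A_\star)\le1$. Then for all $n\ge1$, \[ \|\mathcal M_n(\mathsf G)\|_{\mathrm{op}}\le\|\mathcal M_{n+1}(\mathsf G)\|_{\mathrm{op}}\le\|D\|_{\mathrm{op}}+\|S^{-1}B\|_{\mathrm{op}}\|CS\|_{\mathrm{op}}K_2(n). \]
   Context: $\mathcal M_k(\mathsf G):=[D|CB|CA_\star B|\dots|CA_\star^{k-2}B]$. $\mathsf{blkspec}(A_\star)$ is the set of pairs $(\lambda,k)$ with $\lambda$ an eigenvalue of $A_\star$ and $k$ the size of an associated Jordan block. Define $\widetilde M(k,N):=N^{1/2}$ if $k=1$; $N^{k-1/2}\big(\frac e{k-1}\big)^{k-1}$ if $2\le k\le N+1$; $N^{1/2}2^N$ if $k\ge N+1$. Define $M(k,\lambda,N):=\min\{\frac{k}{(1-|\lambda|)^{k-1/2}},\widetilde M(k,N)\}$ if $0\le|\lambda|<1$ and $\widetilde M(k,N)$ if $|\lambda|=1$. $K_2(N):=\max_{(\lambda,k)\in\mathsf{blkspec}(A_\star)}M(k,\lambda,N)$. *)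

From HB Require Import structures.
From mathcomp Require Import all_boot all_order all_algebra.
From mathcomp Require Import all_classical all_reals all_analysis.
From mathcomp Require Import complex.
Set Implicit Arguments. Unset Strict Implicit. Unset Printing Implicit Defensive.
Import Order.TTheory GRing.Theory Num.Theory.
Local Open Scope ring_scope.
Local Open Scope classical_set_scope.

Section Defs.
Variable R : realType.
Local Notation C := R[i].

Definition cmod (z : C) : R :=
  Num.sqrt (complex.Re z ^+ 2 + complex.Im z ^+ 2).

Definition vnorm (q : nat) (x : 'cV[C]_q) : R :=
  Num.sqrt (\sum_(i < q) (cmod (x i 0)) ^+ 2).

Definition opnorm (p q : nat) (M : 'M[C]_(p, q)) : R :=
  sup [set vnorm (M *m x) | x in [set x : 'cV[C]_q | vnorm x <= 1]].

(* spectral radius: largest modulus of an eigenvalue (0 if there are none) *)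
Definition spectral_radius (d : nat) (A : 'M[C]_d) : R :=
  sup [set cmod a | a in [set a : C | eigenvalue A a]].

Definition jordan_block (lam : C) (k : nat) : 'M[C]_k :=
  \matrix_(i < k, j < k)
     (if i == j :> nat then lam else if j == i.+1 :> nat then 1 else 0).

Definition jordan_mx (r : nat) (lam : 'I_r -> C) (k : 'I_r -> nat)
  : 'M[C]_(\sum_(i < r) k i) :=
  \mxdiag_(i < r) jordan_block (lam i) (k i).

Definition markov_mx (d m p n : nat) (A : 'M[C]_d) (B : 'M[C]_(d, m))
  (Cm : 'M[C]_(p, d)) (D : 'M[C]_(p, m)) : 'M[C]_(p, \sum_(j < n) m) :=
  \mxrow_(j < n) (if j == 0 :> nat then D else Cm *m A ^+ j.-1 *m B).

Definition Mtilde (k N : nat) : R :=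
  if k == 1%N then Num.sqrt N%:R
  else if (2 <= k <= N.+1)%N then
    N%:R `^ (k%:R - 2^-1) * (expR 1 / (k.-1)%:R) ^+ k.-1
  else Num.sqrt N%:R * 2 ^+ N.

Definition Mbound (k : nat) (lam : C) (N : nat) : R :=
  if cmod lam < 1 then
    Num.min (k%:R / (1 - cmod lam) `^ (k%:R - 2^-1)) (Mtilde k N)
  else Mtilde k N.

Definition K2 (r : nat) (lam : 'I_r -> C) (k : 'I_r -> nat) (N : nat) : R :=
  \big[Num.max/0]_(i < r) Mbound (k i) (lam i) N.

End Defs.

From HB Require Import structures.
From mathcomp Require Import all_boot all_order all_algebra.
From mathcomp Require Import all_classical all_reals all_analysis.
From mathcomp Require Import complex ring lra.
Import Order.TTheory GRing.Theory Num.Theory.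
Set Implicit Arguments. Unset Strict Implicit. Unset Printing Implicit Defensive.
Local Open Scope ring_scope.

(* Split x = (x_0, ..., x_n) into blocks.  Then
   M_{n+1} x = D x_0 + (C S) \sum_{j<n} J^j (S^-1 B x_{j+1}),
   and J is block diagonal with blocks J_k(lam) = lam + N, N nilpotent of
   order k, so |J_k(lam)^j w| <= a_j |w| with a_j = \sum_{i<k} C(j,i) |lam|^(j-i).
   By Cauchy-Schwarz it remains to show sqrt (\sum_{j<n} a_j^2) <= M(k, lam, n).
   For |lam| <= 1 bound each a_j by 1 (k = 1), by \sum_{i<k} C(n,i) <=
   (e n / (k-1))^(k-1) (k <= n+1), or by 2^n; for |lam| < 1 the negative
   binomial series gives a_j <= k (1-|lam|)^(1-k) and \sum_j a_j <= k (1-|lam|)^-k.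
   Every lam is an eigenvalue of A, hence |lam| <= rho(A) <= 1.  Monotonicity
   in n: pad x with a zero last block. *)

Section RealBounds.
Context {R : realType}.
Implicit Types rho : R.

Lemma sqrtr_le (s a : R) : 0 <= a -> s <= a ^+ 2 -> Num.sqrt s <= a.
Proof. by move=> a0 sa; rewrite -[a]ger0_norm // -sqrtr_sqr ler_wsqrtr. Qed.

Lemma CauchySchwarz_sum (I : finType) (a b : I -> R) :
  \sum_i a i * b i <= Num.sqrt (\sum_i a i ^+ 2) * Num.sqrt (\sum_i b i ^+ 2).
Proof.
set s := \sum_i a i * b i; set A := \sum_i a i ^+ 2; set B := \sum_i b i ^+ 2.
have A0 : 0 <= A by apply: sumr_ge0 => i _; exact: sqr_ge0.
have B0 : 0 <= B by apply: sumr_ge0 => i _; exact: sqr_ge0.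
rewrite -sqrtrM // (le_trans (ler_norm s)) // -sqrtr_sqr ler_wsqrtr //.
have [A_eq0|A_neq0] := eqVneq A 0.
  have a0 i : a i = 0.
    apply/eqP; rewrite -sqrf_eq0; apply/eqP.
    by apply: (psumr_eq0P _ A_eq0) => // j _; exact: sqr_ge0.
  by rewrite /s big1 ?expr0n ?mulr_ge0 // => i _; rewrite a0 mul0r.
(* [A (A B - s^2)] is the sum of squares [\sum_i (s a_i - A b_i)^2]. *)
have : 0 <= A * (A * B - s ^+ 2).
  have -> : A * (A * B - s ^+ 2) = \sum_i (s * a i - A * b i) ^+ 2.
    transitivity (\sum_i (s ^+ 2 * a i ^+ 2 - (2 * s * A) * (a i * b i)
                          + A ^+ 2 * b i ^+ 2)).
      by rewrite big_split /= sumrB -!mulr_sumr -/s -/A -/B; ring.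
    by apply: eq_bigr => i _; ring.
  by apply: sumr_ge0 => i _; exact: sqr_ge0.
by rewrite pmulr_rge0 ?subr_ge0 // lt_def A_neq0.
Qed.

Lemma sqrt_sum_sqr_le (N : nat) (a : 'I_N -> R) (c : R) : 0 <= c ->
  (forall j, 0 <= a j <= c) -> Num.sqrt (\sum_j a j ^+ 2) <= Num.sqrt N%:R * c.
Proof.
move=> c0 ac; rewrite -[c]ger0_norm // -sqrtr_sqr -sqrtrM // ler_wsqrtr //.
apply: (@le_trans _ _ (\sum_(j < N) c ^+ 2)).
  by apply: ler_sum => j _; case/andP: (ac j) => aj0 ajc; rewrite lerXn2r.
by rewrite sumr_const card_ord mulr_natl.
Qed.

Lemma powR_Sn_sub_half (x : R) (K : nat) : 0 < x ->
  x `^ (K.+1%:R - 2^-1) = x ^+ K * Num.sqrt x.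
Proof.
move=> x0; have -> : K.+1%:R - 2^-1 = K%:R + 2^-1 :> R by rewrite mulrSr; lra.
rewrite powRD; last by rewrite gt_eqF ?implybT.
by rewrite powR_mulrn ?ltW // powR12_sqrt // ltW.
Qed.

Lemma binomial_term_le1 rho j i : 0 <= rho -> rho <= 1 ->
  'C(j, i)%:R * rho ^+ (j - i) * (1 - rho) ^+ i <= 1.
Proof.
move=> rho0 rho1; case: (leqP i j) => [ij|ji]; last by rewrite bin_small // !mul0r.
(* a single term of the binomial expansion of [(rho + (1 - rho))^j = 1] *)
have E := exprDn rho (1 - rho) j; rewrite addrC subrK expr1n in E.
rewrite [X in _ <= X]E (bigD1 (Ordinal (ij : i < j.+1)%N)) //=.
rewrite -[X in X <= _]mulrA mulr_natl lerDl.
by apply: sumr_ge0 => l _; rewrite mulrn_wge0 // mulr_ge0 ?exprn_ge0 ?subr_ge0.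
Qed.

Lemma binomial_partial_sum_le K N : (0 < K)%N -> (K <= N)%N ->
  \sum_(i < K.+1) 'C(N, i)%:R <= (expR 1 / K%:R) ^+ K * N%:R ^+ K :> R.
Proof.
move=> K0 KN; have Kr : 0 < K%:R :> R by rewrite ltr0n.
have Nr : 0 < N%:R :> R by rewrite ltr0n (leq_trans K0).
(* compare with [(1 + y)^N <= e^(y N)] at [y = K / N] *)
set y : R := K%:R / N%:R.
have y0 : 0 < y by rewrite divr_gt0.
have y1 : y <= 1 by rewrite ler_pdivrMr // mul1r ler_nat.
have sum_le : (\sum_(i < K.+1) 'C(N, i)%:R) * y ^+ K <= (1 + y) ^+ N.
  rewrite exprDn mulr_suml (bigID (fun i : 'I_N.+1 => (i < K.+1)%N)) /=.
  rewrite (big_ord_widen N.+1 (fun i => 'C(N, i)%:R * y ^+ K)) ?ltnS //.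
  apply: ler_wpDr.
    by apply: sumr_ge0 => i _; rewrite mulrn_wge0 ?mulr_ge0 ?exprn_ge0 ?ltW.
  apply: ler_sum => i iK; rewrite expr1n mul1r -[X in _ <= X]mulr_natl.
  by apply: ler_wpM2l => //; exact: (ler_wiXn2l (ltW y0) y1 (iK : (i <= K)%N)).
have exp_le : (1 + y) ^+ N <= expR 1 ^+ K.
  have -> : expR 1 ^+ K = expR y ^+ N.
    by rewrite -!expRM_natl mulr1 /y mulrC divfK ?lt0r_neq0.
  by apply: lerXn2r; rewrite ?nnegrE ?expR_ge1Dx ?expR_ge0 // addr_ge0 // ltW.
have -> : (expR 1 / K%:R) ^+ K * N%:R ^+ K = expR 1 ^+ K / y ^+ K.
  by rewrite /y !expr_div_n; field; rewrite !expf_neq0 ?lt0r_neq0.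
by rewrite ler_pdivlMr ?exprn_gt0 // (le_trans sum_le exp_le).
Qed.

Definition negbin_sum rho (i N : nat) : R :=
  \sum_(j < N) 'C(j, i)%:R * rho ^+ (j - i).

Lemma negbin_sum_le_succ rho i N : 0 <= rho ->
  negbin_sum rho i N <= negbin_sum rho i N.+1.
Proof.
by move=> rho0; rewrite /negbin_sum big_ord_recr lerDl mulr_ge0 ?exprn_ge0.
Qed.

Lemma negbin_sum0S rho N : negbin_sum rho 0 N.+1 = rho * negbin_sum rho 0 N + 1.
Proof.
rewrite /negbin_sum big_ord_recl bin0 subn0 expr0 mulr1 addrC mulr_sumr.
by congr (_ + _); apply: eq_bigr => j _; rewrite !bin0 !subn0 exprS; ring.
Qed.

Lemma negbin_sumSS rho i N :
  negbin_sum rho i.+1 N.+1 = rho * negbin_sum rho i.+1 N + negbin_sum rho i N.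
Proof.
rewrite /negbin_sum big_ord_recl bin0n mul0r add0r.
under eq_bigr => j _ do rewrite binS natrD subSS mulrDl.
rewrite big_split /= mulr_sumr; congr (_ + _); apply: eq_bigr => j _.
case: (ltnP i j) => [ij|]; first by rewrite -(subnSK ij) exprS; ring.
by move=> ji; rewrite bin_small ?ltnS // !mul0r mulr0.
Qed.

(* the partial sums of the negative binomial series [(1 - rho)^-(i+1)] *)
Lemma negbin_sum_le rho i N : 0 <= rho -> rho < 1 ->
  (1 - rho) ^+ i.+1 * negbin_sum rho i N <= 1.
Proof.
move=> rho0 rho1; elim: i N => [|i IH] N.
  by have := negbin_sum_le_succ 0 N rho0; rewrite negbin_sum0S expr1; nra.
have step : (1 - rho) * negbin_sum rho i.+1 N <= negbin_sum rho i N.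
  by have := negbin_sum_le_succ i.+1 N rho0; rewrite negbin_sumSS; nra.
rewrite exprSr -mulrA (le_trans _ (IH N)) // ler_wpM2l //.
by rewrite exprn_ge0 // subr_ge0 ltW.
Qed.

End RealBounds.

Section JordanCoef.
Context {R : realType}.
Implicit Types rho : R.

Definition jordan_coef rho (k j : nat) : R :=
  \sum_(i < k) 'C(j, i)%:R * rho ^+ (j - i).

Lemma jordan_coef_ge0 rho k j : 0 <= rho -> 0 <= jordan_coef rho k j.
Proof. by move=> rho0; apply: sumr_ge0 => i _; rewrite mulr_ge0 ?exprn_ge0. Qed.

Lemma jordan_coefE rho k j :
  jordan_coef rho k j = \sum_(i < j.+1 | (i < k)%N) 'C(j, i)%:R * rho ^+ (j - i).
Proof.
pose F i := 'C(j, i)%:R * rho ^+ (j - i).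
have F0 i : (j < i)%N -> F i = 0 by move=> ji; rewrite /F bin_small ?mul0r.
rewrite /jordan_coef (big_ord_widen (j.+1 + k) F (leq_addl _ _)).
rewrite (big_ord_widen_cond (j.+1 + k) (fun i => (i < k)%N) F (leq_addr _ _)).
rewrite [LHS](bigID (fun i : 'I__ => (i < j.+1)%N)) /= [X in _ + X]big1 ?addr0.
  by apply: eq_bigl => i; rewrite andbC.
by move=> i /andP[_]; rewrite -leqNgt => /F0.
Qed.

Lemma jordan_coef_le_exp2 rho k j : 0 <= rho -> rho <= 1 ->
  jordan_coef rho k j <= 2 ^+ j.
Proof.
move=> rho0 rho1; rewrite jordan_coefE.
apply: (@le_trans _ _ ((rho + 1) ^+ j)); last first.
  by rewrite lerXn2r ?nnegrE ?addr_ge0 // lerD2r.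
rewrite exprDn big_mkcond /= ler_sum // => i _.
rewrite expr1n mulr1 mulrC mulr_natr.
by case: ifP => _ //; rewrite mulrn_wge0 ?exprn_ge0.
Qed.

Lemma jordan_coef_le_geom rho k j : 0 <= rho -> rho < 1 ->
  jordan_coef rho k j <= k%:R * (1 - rho)^-1 ^+ k.-1.
Proof.
move=> rho0 rho1; have t0 : 0 < 1 - rho by rewrite subr_gt0.
have u1 : 1 <= (1 - rho)^-1 by rewrite invf_ge1 // lerBlDr lerDl.
rewrite [X in _ <= X]mulr_natl -[X in _ *+ X]card_ord -sumr_const ler_sum // => i _.
apply: (@le_trans _ _ ((1 - rho)^-1 ^+ i)).
  rewrite exprVn -div1r ler_pdivlMr ?exprn_gt0 //.
  exact: binomial_term_le1 (ltW rho1).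
by rewrite ler_weXn2l // -ltnS (ltn_predK (ltn_ord i)).
Qed.

Lemma sum_jordan_coef_le_geom rho k N : 0 <= rho -> rho < 1 ->
  \sum_(j < N) jordan_coef rho k j <= k%:R * (1 - rho)^-1 ^+ k.
Proof.
move=> rho0 rho1; have t0 : 0 < 1 - rho by rewrite subr_gt0.
have u1 : 1 <= (1 - rho)^-1 by rewrite invf_ge1 // lerBlDr lerDl.
rewrite /jordan_coef exchange_big /= [X in _ <= X]mulr_natl -[X in _ *+ X]card_ord.
rewrite -sumr_const ler_sum // => i _.
apply: (@le_trans _ _ ((1 - rho)^-1 ^+ i.+1)); last exact: ler_weXn2l.
rewrite exprVn -div1r ler_pdivlMr ?exprn_gt0 // mulrC.
exact: negbin_sum_le.
Qed.

Lemma sqrt_sum_jordan_coef_le_geom rho k N : 0 <= rho -> rho < 1 ->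
  Num.sqrt (\sum_(j < N) jordan_coef rho k j ^+ 2) <=
    k%:R / (1 - rho) `^ (k%:R - 2^-1).
Proof.
move=> rho0 rho1; have t0 : 0 < 1 - rho by rewrite subr_gt0.
case: k => [|K].
  by rewrite mul0r big1 ?sqrtr0 // => j _; rewrite /jordan_coef big_ord0 expr0n.
set u := (1 - rho)^-1; have u0 : 0 < u by rewrite invr_gt0.
(* [\sum_j a_j^2 <= (max_j a_j) (\sum_j a_j)] *)
have sum_sqr_le : \sum_(j < N) jordan_coef rho K.+1 j ^+ 2 <=
    (K.+1%:R * u ^+ K) * (K.+1%:R * u ^+ K.+1).
  apply: (@le_trans _ _ (\sum_(j < N) K.+1%:R * u ^+ K * jordan_coef rho K.+1 j)).
    apply: ler_sum => j _; rewrite expr2 ler_wpM2r ?jordan_coef_ge0 //.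
    exact: jordan_coef_le_geom.
  rewrite -mulr_sumr; apply: ler_wpM2l; first by rewrite mulr_ge0 ?exprn_ge0 ?ltW.
  exact: sum_jordan_coef_le_geom.
rewrite powR_Sn_sub_half //; apply: sqrtr_le.
  by rewrite divr_ge0 ?mulr_ge0 ?exprn_ge0 ?sqrtr_ge0 ?ltW.
rewrite (_ : (_ / _) ^+ 2 = K.+1%:R * u ^+ K * (K.+1%:R * u ^+ K.+1)) //.
rewrite /u expr_div_n exprMn sqr_sqrtr ?ltW // !exprVn [(1 - rho) ^+ K.+1]exprS.
field; by rewrite !expf_neq0 ?lt0r_neq0.
Qed.

Lemma sqrt_sum_jordan_coef_le_Mtilde rho k N : 0 <= rho -> rho <= 1 ->
  Num.sqrt (\sum_(j < N) jordan_coef rho k j ^+ 2) <= Mtilde R k N.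
Proof.
move=> rho0 rho1; have jc0 k' j := jordan_coef_ge0 k' j rho0.
rewrite /Mtilde; case: eqP => [->|k_neq1].
  rewrite -[X in _ <= X]mulr1; apply: sqrt_sum_sqr_le => // j.
  by rewrite jc0 /jordan_coef big_ord1 bin0 subn0 mul1r exprn_ile1.
case: ifP => [/andP[k2 kN]|_]; last first.
  apply: sqrt_sum_sqr_le => [|j]; first by rewrite exprn_ge0.
  rewrite jc0 (le_trans (jordan_coef_le_exp2 _ _ rho0 rho1)) //.
  by rewrite ler_weXn2l ?ler1n // ltnW.
case: k k2 kN k_neq1 => [//|K]; rewrite !ltnS => K0 KN _ /=.
set c : R := (expR 1 / K%:R) ^+ K * N%:R ^+ K.
have c0 : 0 <= c by rewrite mulr_ge0 ?exprn_ge0 ?divr_ge0 ?expR_ge0.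
apply: (le_trans (sqrt_sum_sqr_le c0 _)) => [j|].
  rewrite jc0 (le_trans _ (binomial_partial_sum_le K0 KN)) // ler_sum // => i _.
  rewrite -[X in _ <= X]mulr1 ler_pM ?exprn_ge0 ?exprn_ile1 // ler_nat.
  by rewrite leq_bin2l // ltnW.
rewrite (_ : N%:R `^ _ * _ = Num.sqrt N%:R * c) //.
by rewrite powR_Sn_sub_half ?ltr0n ?(leq_trans K0) // /c; ring.
Qed.

Lemma sqrt_sum_jordan_coef_le_Mbound (lam : R[i]) k N : cmod lam <= 1 ->
  Num.sqrt (\sum_(j < N) jordan_coef (cmod lam) k j ^+ 2) <= Mbound k lam N.
Proof.
move=> lam1; have lam0 : 0 <= cmod lam by exact: sqrtr_ge0.
rewrite /Mbound; case: ifP => [lam_lt1|_].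
  by rewrite le_min sqrt_sum_jordan_coef_le_geom ?sqrt_sum_jordan_coef_le_Mtilde.
exact: sqrt_sum_jordan_coef_le_Mtilde.
Qed.

End JordanCoef.

Section ComplexNorms.
Context {R : realType}.
Local Notation C := R[i].
Implicit Types (a b z : C).

Lemma cmodE z : cmod z = Normc.normc z.
Proof. by case: z. Qed.

Lemma cmod_ge0 z : 0 <= cmod z.
Proof. exact: sqrtr_ge0. Qed.

Lemma cmod0 : cmod (0 : C) = 0.
Proof. by rewrite cmodE Normc.normc0. Qed.

Lemma cmod_eq0 z : cmod z = 0 -> z = 0.
Proof. by rewrite cmodE; exact: Normc.eq0_normc. Qed.

Lemma cmodD a b : cmod (a + b) <= cmod a + cmod b.
Proof. by rewrite !cmodE; exact: le_normcD. Qed.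

Lemma cmodM a b : cmod (a * b) = cmod a * cmod b.
Proof. by rewrite !cmodE Normc.normcM. Qed.

Lemma cmodX z n : cmod (z ^+ n) = cmod z ^+ n.
Proof.
elim: n => [|n IH]; first by rewrite !expr0 cmodE Normc.normc1.
by rewrite !exprS cmodM IH.
Qed.

Lemma cmod_nat n : cmod (n%:R : C) = n%:R.
Proof. by rewrite cmodE normcMn Normc.normc1. Qed.

Lemma cmod_real (x : R) : 0 <= x -> cmod (x%:C)%C = x.
Proof. by move=> x0; rewrite /cmod /= expr0n addr0 sqrtr_sqr ger0_norm. Qed.

Lemma vnorm_ge0 q (x : 'cV[C]_q) : 0 <= vnorm x.
Proof. exact: sqrtr_ge0. Qed.

Lemma vnorm_sqr q (x : 'cV[C]_q) : vnorm x ^+ 2 = \sum_i cmod (x i 0) ^+ 2.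
Proof. by rewrite sqr_sqrtr // sumr_ge0 // => i _; exact: sqr_ge0. Qed.

Lemma vnorm0 q : vnorm (0 : 'cV[C]_q) = 0.
Proof. by rewrite /vnorm big1 ?sqrtr0 // => i _; rewrite mxE cmod0 expr0n. Qed.

Lemma vnorm_eq0 q (x : 'cV[C]_q) : vnorm x = 0 -> x = 0.
Proof.
move=> /eqP; rewrite sqrtr_eq0 => x_le0.
have sum0 : \sum_i cmod (x i 0) ^+ 2 = 0.
  by apply/eqP; rewrite eq_le x_le0 sumr_ge0 // => i _; exact: sqr_ge0.
apply/matrixP => i j; rewrite (ord1 j) mxE; apply: cmod_eq0; apply/eqP.
by rewrite -sqrf_eq0 (psumr_eq0P (fun k _ => sqr_ge0 (cmod (x k 0))) sum0).
Qed.

Lemma vnormZ q a (x : 'cV[C]_q) : vnorm (a *: x) = cmod a * vnorm x.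
Proof.
rewrite /vnorm; under eq_bigr => i _ do rewrite mxE cmodM exprMn.
by rewrite -mulr_sumr sqrtrM ?sqr_ge0 // sqrtr_sqr ger0_norm ?cmod_ge0.
Qed.

Lemma vnormD q (x y : 'cV[C]_q) : vnorm (x + y) <= vnorm x + vnorm y.
Proof.
apply: sqrtr_le; first by rewrite addr_ge0 ?vnorm_ge0.
apply: (@le_trans _ _ (\sum_i (cmod (x i 0) + cmod (y i 0)) ^+ 2)).
  apply: ler_sum => i _; rewrite mxE lerXn2r ?nnegrE ?cmodD ?cmod_ge0 //.
  by rewrite addr_ge0 ?cmod_ge0.
have CS := CauchySchwarz_sum (fun i => cmod (x i 0)) (fun i => cmod (y i 0)).
rewrite -/(vnorm x) -/(vnorm y) in CS.
have -> : \sum_i (cmod (x i 0) + cmod (y i 0)) ^+ 2 = vnorm x ^+ 2 + vnorm y ^+ 2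
    + 2 * \sum_i cmod (x i 0) * cmod (y i 0).
  by rewrite !vnorm_sqr mulr_sumr -!big_split /=; apply: eq_bigr => i _; ring.
nra.
Qed.

Lemma vnorm_sum q (I : finType) (P : pred I) (F : I -> 'cV[C]_q) :
  vnorm (\sum_(i | P i) F i) <= \sum_(i | P i) vnorm (F i).
Proof.
apply: (big_ind2 (fun v s => vnorm v <= s)) => //; first by rewrite vnorm0.
by move=> ? ? ? ? h1 h2; exact: le_trans (vnormD _ _) (lerD h1 h2).
Qed.

Lemma cmod_le_vnorm q (x : 'cV[C]_q) i : cmod (x i 0) <= vnorm x.
Proof.
rewrite -[cmod _]ger0_norm ?cmod_ge0 // -sqrtr_sqr ler_wsqrtr //.
by rewrite (bigD1 i) //= lerDl sumr_ge0 // => j _; exact: sqr_ge0.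
Qed.

Lemma vnorm_mxcol (p : nat) (p_ : 'I_p -> nat) (x_ : forall i, 'cV[C]_(p_ i)) :
  vnorm (\mxcol_i x_ i) ^+ 2 = \sum_i vnorm (x_ i) ^+ 2.
Proof.
rewrite vnorm_sqr; under [RHS]eq_bigr do rewrite vnorm_sqr.
rewrite sig_big_dep /= (reindex _ tagnat.sig_bij_on) /=.
by apply: eq_bigr => l _; rewrite !mxE.
Qed.

End ComplexNorms.

Section OperatorNorm.
Context {R : realType}.
Local Notation C := R[i].
Local Open Scope classical_set_scope.

Lemma mulmx_col_sum p q (M : 'M[C]_(p, q)) (x : 'cV[C]_q) :
  M *m x = \sum_j x j 0 *: col j M.
Proof.
apply/matrixP => i k; rewrite (ord1 k) !mxE summxE.
by apply: eq_bigr => j _; rewrite !mxE mulrC.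
Qed.

Lemma opnorm_has_sup p q (M : 'M[C]_(p, q)) :
  has_sup [set vnorm (M *m x) | x in [set x : 'cV[C]_q | vnorm x <= 1]].
Proof.
split; first by exists (vnorm (M *m 0)), 0; rewrite //= vnorm0 ler01.
exists (\sum_j vnorm (col j M)) => _ [x /= x1 <-].
rewrite mulmx_col_sum (le_trans (vnorm_sum _ _)) // ler_sum // => j _.
by rewrite vnormZ ler_piMl ?vnorm_ge0 // (le_trans (cmod_le_vnorm _ _)).
Qed.

Lemma opnorm_ge0 p q (M : 'M[C]_(p, q)) : 0 <= opnorm M.
Proof.
rewrite -(vnorm0 p) -(mulmx0 _ M); have ub := sup_upper_bound (opnorm_has_sup M).
by apply: ub; exists 0; rewrite //= vnorm0 ler01.
Qed.

Lemma vnorm_mulmx_le p q (M : 'M[C]_(p, q)) (x : 'cV[C]_q) :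
  vnorm (M *m x) <= opnorm M * vnorm x.
Proof.
have [x0|x_neq0] := eqVneq x 0; first by rewrite x0 mulmx0 !vnorm0 mulr0.
have t0 : 0 < vnorm x.
  by rewrite lt_def vnorm_ge0 andbT; apply: contra x_neq0 => /eqP/vnorm_eq0 ->.
set c : C := ((vnorm x)^-1)%:C%C.
have c_cmod : cmod c = (vnorm x)^-1 by rewrite cmod_real // invr_ge0 ltW.
have : vnorm (M *m (c *: x)) <= opnorm M.
  have ub := sup_upper_bound (opnorm_has_sup M); apply: ub; exists (c *: x) => //.
  by rewrite /= vnormZ c_cmod mulVf ?lt0r_neq0.
by rewrite -scalemxAr vnormZ c_cmod mulrC ler_pdivrMr.
Qed.

Lemma opnorm_le p q (M : 'M[C]_(p, q)) (c : R) : 0 <= c ->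
  (forall x, vnorm (M *m x) <= c * vnorm x) -> opnorm M <= c.
Proof.
move=> c0 Mc; apply: ge_sup.
  by exists (vnorm (M *m 0)), 0; rewrite //= vnorm0 ler01.
move=> _ [x /= x1 <-]; apply: (le_trans (Mc x)).
by rewrite -[X in _ <= X]mulr1 ler_wpM2l.
Qed.

Lemma sqrt_sum_vnorm_mulmx_le p q N (M : 'M[C]_(p, q)) (y : 'I_N -> 'cV[C]_q) :
  Num.sqrt (\sum_j vnorm (M *m y j) ^+ 2) <=
    opnorm M * Num.sqrt (\sum_j vnorm (y j) ^+ 2).
Proof.
rewrite -[opnorm M]ger0_norm ?opnorm_ge0 // -sqrtr_sqr -sqrtrM ?sqr_ge0 //.
rewrite ler_wsqrtr // mulr_sumr ler_sum // => j _; rewrite -exprMn.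
by apply: lerXn2r; rewrite ?nnegrE ?mulr_ge0 ?vnorm_ge0 ?opnorm_ge0 ?vnorm_mulmx_le.
Qed.

End OperatorNorm.

Section JordanBlock.
Context {R : realType}.
Local Notation C := R[i].

Definition shift_mx k : 'M[C]_k := \matrix_(a, b) (b == a.+1 :> nat)%:R.

Lemma jordan_blockE (lam : C) k : jordan_block lam k = lam%:M + shift_mx k.
Proof.
apply/matrixP => a b; rewrite !mxE.
have [->|ab] := eqVneq a b; first by rewrite eqxx ltn_eqF ?addr0.
by rewrite val_eqE (negbTE ab) mulr0n add0r; case: (b == a.+1 :> nat).
Qed.

Lemma shift_mx_expE k i a b : (shift_mx k ^+ i) a b = (b == (a + i)%N :> nat)%:R.
Proof.
elim: i a b => [|i IH] a b; first by rewrite expr0 mxE addn0 eq_sym.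
rewrite exprS -mulmxE mxE; under eq_bigr => c _ do rewrite IH mxE.
case: (ltnP a.+1 k) => [ak|ka].
  rewrite (bigD1 (Ordinal ak)) //= eqxx mul1r addSnnS big1 ?addr0 // => c ca.
  have [cE|] := eqVneq (c : nat) a.+1; last by rewrite mul0r.
  by case/eqP: ca; apply: val_inj.
rewrite big1 => [|c _]; last by rewrite ltn_eqF ?mul0r // (leq_trans (ltn_ord c)).
rewrite ltn_eqF // (leq_trans (ltn_ord b)) // (leq_trans ka) //.
by rewrite addnS ltnS leq_addr.
Qed.

Lemma shift_mx_exp_eq0 k i : (k <= i)%N -> shift_mx k ^+ i = 0.
Proof.
move=> ki; apply/matrixP => a b; rewrite shift_mx_expE mxE ltn_eqF //.
by rewrite (leq_trans (ltn_ord b)) // (leq_trans ki) // leq_addl.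
Qed.

Lemma vnorm_shift_mx k (v : 'cV[C]_k) : vnorm (shift_mx k *m v) <= vnorm v.
Proof.
case: k v => [|K] v; first by rewrite /vnorm !big_ord0.
rewrite ler_wsqrtr // big_ord_recr [X in _ <= X]big_ord_recl /=.
have -> : (shift_mx K.+1 *m v) ord_max 0 = 0.
  by rewrite mxE big1 // => b _; rewrite mxE ltn_eqF ?mul0r.
rewrite cmod0 expr0n addr0 addrC; apply: ler_wpDr; first exact: sqr_ge0.
apply: ler_sum => a _.
rewrite mxE (bigD1 (lift ord0 a)) //= mxE eqxx mul1r big1 ?addr0 // => b ba.
rewrite mxE; have [bE|] := eqVneq (b : nat) a.+1; last by rewrite mul0r.
by case/eqP: ba; apply: val_inj.
Qed.

Lemma vnorm_shift_mx_exp k i (v : 'cV[C]_k) :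
  vnorm (shift_mx k ^+ i *m v) <= vnorm v.
Proof.
elim: i => [|i IH]; first by rewrite expr0 mul1mx.
by rewrite exprS -mulmxE -mulmxA (le_trans (vnorm_shift_mx _)).
Qed.

Lemma scalar_mxX k (a : C) n : (a%:M : 'M[C]_k) ^+ n = (a ^+ n)%:M.
Proof.
elim: n => [|n IH]; first by rewrite !expr0.
by rewrite !exprS IH -mulmxE -scalar_mxM.
Qed.

Lemma jordan_block_exp (lam : C) k j : jordan_block lam k ^+ j =
  \sum_(i < j.+1) ('C(j, i)%:R * lam ^+ (j - i)) *: shift_mx k ^+ i.
Proof.
rewrite jordan_blockE exprDn_comm; last by rewrite /GRing.comm -!mulmxE scalar_mxC.
apply: eq_bigr => i _.
by rewrite scalar_mxX -mulmxE mul_scalar_mx -scaler_nat scalerA mulrC.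
Qed.

Lemma vnorm_jordan_block_exp (lam : C) k j (w : 'cV[C]_k) :
  vnorm (jordan_block lam k ^+ j *m w) <= jordan_coef (cmod lam) k j * vnorm w.
Proof.
rewrite jordan_block_exp mulmx_suml jordan_coefE mulr_suml.
apply: (le_trans (vnorm_sum _ _)).
rewrite [X in _ <= X]big_mkcond /= ler_sum // => i _.
rewrite -scalemxAl vnormZ cmodM cmod_nat cmodX; case: ifP => [ik|].
  by rewrite ler_wpM2l ?mulr_ge0 ?exprn_ge0 ?cmod_ge0 ?vnorm_shift_mx_exp.
by rewrite ltnNge => /negbFE/shift_mx_exp_eq0 ->; rewrite mul0mx vnorm0 mulr0.
Qed.

Lemma vnorm_sum_jordan_block_exp (lam : C) k N (w : 'I_N -> 'cV[C]_k) :
  cmod lam <= 1 ->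
  vnorm (\sum_(j < N) jordan_block lam k ^+ j *m w j) <=
    Mbound k lam N * Num.sqrt (\sum_j vnorm (w j) ^+ 2).
Proof.
move=> lam1; apply: (le_trans (vnorm_sum _ _)).
apply: (@le_trans _ _ (\sum_(j < N) jordan_coef (cmod lam) k j * vnorm (w j))).
  by apply: ler_sum => j _; exact: vnorm_jordan_block_exp.
apply: (le_trans (CauchySchwarz_sum _ _)).
by rewrite ler_wpM2r ?sqrtr_ge0 ?sqrt_sum_jordan_coef_le_Mbound.
Qed.

End JordanBlock.

Section BlockDiagonal.
Context {T : pzSemiRingType} {p : nat} {p_ : 'I_p -> nat}.

Lemma mul_mxdiag (A_ B_ : forall i, 'M[T]_(p_ i)) :
  \mxdiag_i A_ i *m \mxdiag_i B_ i = \mxdiag_i (A_ i *m B_ i).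
Proof.
rewrite {2}/mxdiag mul_mxdiag_mxblock /mxdiag; apply: eq_mxblock => i j.
by case: eqVneq => [->|]; rewrite ?conform_mx_id ?mulmx0.
Qed.

Lemma mxdiagX (B_ : forall i, 'M[T]_(p_ i)) n :
  (\mxdiag_i B_ i) ^+ n = \mxdiag_i (B_ i ^+ n).
Proof.
elim: n => [|n IH].
  by rewrite expr0; under eq_mxdiag do rewrite expr0; rewrite mxdiagZ.
rewrite !exprS IH -mulmxE mul_mxdiag.
by under [RHS]eq_mxdiag do rewrite exprS -mulmxE.
Qed.

Lemma scale_mxrow m (a : T) (M_ : forall i, 'M[T]_(m, p_ i)) :
  a *: \mxrow_i M_ i = \mxrow_i (a *: M_ i).
Proof. by apply/matrixP => i j; rewrite !mxE. Qed.

End BlockDiagonal.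

Section JordanMatrix.
Context {R : realType}.
Local Notation C := R[i].
Variables (r : nat) (lam : 'I_r -> C) (k : 'I_r -> nat).

Lemma vnorm_sum_jordan_mx_exp N (y : 'I_N -> 'cV[C]_(\sum_i k i)) :
  (forall i, cmod (lam i) <= 1) ->
  vnorm (\sum_(j < N) jordan_mx lam k ^+ j *m y j) <=
    K2 lam k N * Num.sqrt (\sum_j vnorm (y j) ^+ 2).
Proof.
move=> lam1; pose s i := \sum_(j < N) vnorm (submxcol (y j) i) ^+ 2.
have -> : \sum_(j < N) jordan_mx lam k ^+ j *m y j =
    \mxcol_i (\sum_(j < N) jordan_block (lam i) (k i) ^+ j *m submxcol (y j) i).
  rewrite mxcol_sum; apply: eq_bigr => j _.
  by rewrite /jordan_mx mxdiagX -{1}[y j]submxcolK mul_mxdiag_mxcol.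
have -> : \sum_j vnorm (y j) ^+ 2 = \sum_i s i.
  by rewrite exchange_big; apply: eq_bigr => j _; rewrite -vnorm_mxcol submxcolK.
have K0 : 0 <= K2 lam k N by exact: bigmax_ge_id.
have s0 i : 0 <= s i by apply: sumr_ge0 => j _; exact: sqr_ge0.
rewrite -[vnorm _]ger0_norm ?vnorm_ge0 // -sqrtr_sqr; apply: sqrtr_le.
  by rewrite mulr_ge0 ?sqrtr_ge0.
rewrite vnorm_mxcol exprMn sqr_sqrtr ?sumr_ge0 // mulr_sumr ler_sum // => i _.
rewrite -[s i]sqr_sqrtr // -exprMn.
apply: lerXn2r; rewrite ?nnegrE ?vnorm_ge0 ?mulr_ge0 ?sqrtr_ge0 //.
apply: le_trans (vnorm_sum_jordan_block_exp _ (lam1 i)) _.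
by rewrite ler_wpM2r ?sqrtr_ge0 // le_bigmax.
Qed.

Definition row_last n : 'rV[C]_n := \row_(b < n) (b == n.-1 :> nat)%:R.

Lemma row_last_jordan_block (mu : C) n :
  row_last n *m jordan_block mu n = mu *: row_last n.
Proof.
apply/matrixP => ? c; rewrite ord1 !mxE (bigD1 c) //= !mxE eqxx.
rewrite big1 => [|b bc]; first by rewrite addr0 mulrC.
rewrite !mxE val_eqE (negbTE bc).
have [bE|] := eqVneq (b : nat) n.-1; last by rewrite mul0r.
by rewrite ifF ?mulr0 // bE ltn_eqF // prednK ?(leq_ltn_trans _ (ltn_ord c)).
Qed.

Lemma eigenvalue_jordan_mx i : (0 < k i)%N -> eigenvalue (jordan_mx lam k) (lam i).
Proof.
move=> ki; apply/eigenvalueP; exists (\mxrow_j ((j == i)%:R *: row_last (k j))).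
  rewrite mul_mxrow_mxdiag scale_mxrow; apply: eq_mxrow => j.
  rewrite -scalemxAl row_last_jordan_block !scalerA.
  by case: eqVneq => [->|]; rewrite ?mul0r ?mulr0 // mul1r mulr1.
apply/eqP => /(congr1 (fun M => submxrow M i)).
rewrite mxrowK submxrow0 eqxx scale1r.
have last_lt : ((k i).-1 < k i)%N by rewrite ltn_predL.
move/matrixP/(_ 0 (Ordinal last_lt)); rewrite !mxE eqxx => /eqP.
by rewrite oner_eq0.
Qed.

End JordanMatrix.

Section Eigenvalues.
Context {R : realType}.
Local Notation C := R[i].
Local Open Scope classical_set_scope.

Lemma eigenvalue_conj d (S J : 'M[C]_d) a : S \in unitmx ->
  eigenvalue J a -> eigenvalue (S *m J *m invmx S) a.
Proof.
move=> Su /eigenvalueP[v vJ v_neq0]; apply/eigenvalueP; exists (v *m invmx S).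
  by rewrite !mulmxA mulmxKV // vJ -scalemxAl.
by apply: contra v_neq0 => /eqP vS0; rewrite -(mulmxKV Su v) vS0 mul0mx.
Qed.

(* [eigenvalue] refers to row eigenvectors [v *m A = a *: v], so [v^T] is a
   column eigenvector of [A^T]. *)
Lemma eigenvalue_cmod_le_opnorm d (A : 'M[C]_d) a :
  eigenvalue A a -> cmod a <= opnorm A^T.
Proof.
case/eigenvalueP => v vA v_neq0.
have v0 : 0 < vnorm v^T.
  rewrite lt_def vnorm_ge0 andbT; apply: contra v_neq0 => /eqP/vnorm_eq0 vT0.
  by rewrite -(trmxK v) vT0 trmx0.
rewrite -(ler_pM2r v0) -vnormZ.
have -> : a *: v^T = A^T *m v^T by rewrite -trmx_mul vA linearZ.
exact: vnorm_mulmx_le.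
Qed.

Lemma cmod_le_spectral_radius d (A : 'M[C]_d) a :
  eigenvalue A a -> cmod a <= spectral_radius A.
Proof.
move=> Aa.
have ub := @sup_upper_bound _ [set cmod b | b in [set b | eigenvalue A b]].
apply: ub; last by exists a.
split; first by exists (cmod a), a.
by exists (opnorm A^T) => _ [b Ab <-]; exact: eigenvalue_cmod_le_opnorm.
Qed.

End Eigenvalues.

Section MarkovMatrix.
Context {R : realType}.
Local Notation C := R[i].
Variables (d m p : nat) (A : 'M[C]_d) (B : 'M[C]_(d, m)).
Variables (Cm : 'M[C]_(p, d)) (D : 'M[C]_(p, m)).

Lemma markov_mx_mulmx n (x : 'cV[C]_(\sum_(j < n.+1) m)) :
  markov_mx n.+1 A B Cm D *m x =
    D *m submxcol x ord0 +
    \sum_(j < n) Cm *m A ^+ j *m B *m submxcol x (lift ord0 j).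
Proof. by rewrite /markov_mx -{1}[x]submxcolK mul_mxrow_mxcol big_ord_recl. Qed.

Lemma opnorm_markov_mx_le_succ n :
  opnorm (markov_mx n A B Cm D) <= opnorm (markov_mx n.+1 A B Cm D).
Proof.
apply: opnorm_le => [|x]; first exact: opnorm_ge0.
pose x' := \mxcol_(j < n.+1)
  (if unlift ord_max j is Some j' then submxcol x j' else 0 : 'cV[C]_m).
have x'E (j : 'I_n) : unlift ord_max (widen_ord (leqnSn n) j) = Some j.
  rewrite (_ : widen_ord _ j = lift ord_max j) ?liftK //.
  by apply: val_inj; rewrite /= /bump leqNgt ltn_ord.
have -> : markov_mx n A B Cm D *m x = markov_mx n.+1 A B Cm D *m x'.
  rewrite /markov_mx -{1}[x]submxcolK !mul_mxrow_mxcol big_ord_recr /=.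
  by rewrite unlift_none mulmx0 addr0; apply: eq_bigr => j _; rewrite x'E.
have -> : vnorm x = vnorm x'.
  apply/eqP; rewrite -(@eqrXn2 _ 2) ?vnorm_ge0 //.
  rewrite -{1}[x]submxcolK !vnorm_mxcol big_ord_recr /= unlift_none vnorm0.
  by rewrite expr0n addr0; apply/eqP/eq_bigr => j _; rewrite x'E.
exact: vnorm_mulmx_le.
Qed.

End MarkovMatrix.

Lemma mxpow_conj (R : comUnitRingType) d (S J : 'M[R]_d) j : S \in unitmx ->
  (S *m J *m invmx S) ^+ j = S *m J ^+ j *m invmx S.
Proof.
move=> Su; elim: j => [|j IH]; first by rewrite !expr0 mulmx1 mulmxV.
by rewrite exprS IH -mulmxE !mulmxA mulmxKV // exprS -mulmxE !mulmxA.
Qed.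

Section JordanRealization.
Context {R : realType}.
Local Notation C := R[i].
Variables (r : nat) (lam : 'I_r -> C) (k : 'I_r -> nat) (m p : nat).
Variables (A S : 'M[C]_(\sum_(i < r) k i)) (B : 'M[C]_(\sum_(i < r) k i, m)).
Variables (Cm : 'M[C]_(p, \sum_(i < r) k i)) (D : 'M[C]_(p, m)).
Hypotheses (S_unit : S \in unitmx) (AE : A = S *m jordan_mx lam k *m invmx S).

Lemma cmod_jordan_eigenvalue_le1 : (forall i, (0 < k i)%N) ->
  spectral_radius A <= 1 -> forall i, cmod (lam i) <= 1.
Proof.
move=> k_gt0 rhoA i; apply: le_trans rhoA; apply: cmod_le_spectral_radius.
by rewrite AE eigenvalue_conj ?eigenvalue_jordan_mx.
Qed.

Lemma opnorm_markov_mx_le n : (forall i, cmod (lam i) <= 1) ->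
  opnorm (markov_mx n.+1 A B Cm D) <=
    opnorm D + opnorm (invmx S *m B) * opnorm (Cm *m S) * K2 lam k n.
Proof.
move=> lam1; set J := jordan_mx lam k.
have K0 : 0 <= K2 lam k n by exact: bigmax_ge_id.
apply: opnorm_le => [|x]; first by rewrite addr_ge0 ?mulr_ge0 ?opnorm_ge0.
pose y j := invmx S *m B *m submxcol x (lift ord0 j).
have -> : markov_mx n.+1 A B Cm D *m x =
    D *m submxcol x ord0 + Cm *m S *m \sum_(j < n) J ^+ j *m y j.
  rewrite markov_mx_mulmx mulmx_sumr; congr (_ + _); apply: eq_bigr => j _.
  by rewrite AE mxpow_conj // /y !mulmxA.
have x2 : vnorm x ^+ 2 = vnorm (submxcol x ord0) ^+ 2 +
    \sum_(j < n) vnorm (submxcol x (lift ord0 j)) ^+ 2.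
  by rewrite -{1}[x]submxcolK vnorm_mxcol big_ord_recl.
have x0_le : vnorm (submxcol x ord0) <= vnorm x.
  rewrite -(@ler_pXn2r _ 2) ?nnegrE ?vnorm_ge0 // x2 lerDl.
  by apply: sumr_ge0 => j _; exact: sqr_ge0.
have tail_le :
    Num.sqrt (\sum_(j < n) vnorm (submxcol x (lift ord0 j)) ^+ 2) <= vnorm x.
  by apply: sqrtr_le; rewrite ?vnorm_ge0 // x2 lerDr sqr_ge0.
have Jy : vnorm (\sum_(j < n) J ^+ j *m y j) <=
    K2 lam k n * (opnorm (invmx S *m B) * vnorm x).
  apply: le_trans (vnorm_sum_jordan_mx_exp y lam1) _; rewrite ler_wpM2l //.
  apply: le_trans (sqrt_sum_vnorm_mulmx_le _ _) _.
  by rewrite ler_wpM2l ?opnorm_ge0.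
rewrite mulrDl; apply: le_trans (vnormD _ _) (lerD _ _).
  by apply: le_trans (vnorm_mulmx_le _ _) _; rewrite ler_wpM2l ?opnorm_ge0.
apply: le_trans (vnorm_mulmx_le _ _) _.
have -> : opnorm (invmx S *m B) * opnorm (Cm *m S) * K2 lam k n * vnorm x =
    opnorm (Cm *m S) * (K2 lam k n * (opnorm (invmx S *m B) * vnorm x)) by ring.
by rewrite ler_wpM2l ?opnorm_ge0.
Qed.

End JordanRealization.

Unset Implicit Arguments.

Theorem proposition16 (R : realType) (r : nat) (lam : 'I_r -> R[i])
  (k : 'I_r -> nat) (m p : nat)
  (A : 'M[R[i]]_(\sum_(i < r) k i))
  (S : 'M[R[i]]_(\sum_(i < r) k i))
  (B : 'M[R[i]]_(\sum_(i < r) k i, m))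
  (Cm : 'M[R[i]]_(p, \sum_(i < r) k i))
  (D : 'M[R[i]]_(p, m)) :
  (forall i, (0 < k i)%N) ->
  S \in unitmx ->
  A = S *m jordan_mx lam k *m invmx S ->
  spectral_radius A <= 1 ->
  forall n : nat, (1 <= n)%N ->
    opnorm (markov_mx n A B Cm D) <= opnorm (markov_mx n.+1 A B Cm D) /\
    opnorm (markov_mx n.+1 A B Cm D) <=
      opnorm D + opnorm (invmx S *m B) * opnorm (Cm *m S) * K2 lam k n.
Proof.
move=> k_gt0 S_unit AE rhoA n _.
split; first exact: opnorm_markov_mx_le_succ.
exact/opnorm_markov_mx_le/(cmod_jordan_eigenvalue_le1 S_unit AE k_gt0 rhoA).
Qed.
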